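(* Consider $n$ agents over a fixed undirected connected graph with symmetric nonnegative weights $a_{ij}=a_{ji}$ ($a_{ij}>0$ iff $i,j$ are neighbors). Assume the CFP solution set $\mathbf{X}^*$ is non-empty. Let $x_i(t)\in\mathbb{R}^m$ evolve according to $$\dot x_i(t)=\sum_{j\in N_i}a_{ij}(x_j(t)-x_i(t))-\tau\Big(\big[x_i(t)-P_{X_i}(x_i(t))\big]+\nabla g_i^+(x_i(t))\Big),\quad i=1,\dots,n,$$ with $\tau>0$. Then the agents reach consensus asymptotically and there is $x^*\in\mathbf{X}^*$ with $\lim_{t\to\infty}x_i(t)=x^*$ for all $i$.
   Context: For each $i$, $g_i:\mathbb{R}^m\to\mathbb{R}$ convex continuous, $X_i\subset\mathbb{R}^m$ closed convex, $X=\bigcap_i X_i$; the CFP asks for $x$ with $g_i(x)\le0$ for all $i$ and $x\in X$, with solution set $\mathbf{X}^*$. $g_i^+=\max[g_i,0]$; $\nabla g_i^+(x)$ is a subgradient of $g_i^+$ at $x$, chosen as $0$ if $g_i(x)\le0$ and as a subgradient of $g_i$ otherwise, piecewise continuous in $x$; $P_{X_i}$ is Euclidean projection onto $X_i$. Consensus means $\|x_i(t)-x_j(t)\|\to0$ for all $i,j$. *)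

From HB Require Import structures.
From mathcomp Require Import all_boot all_order all_algebra.
From mathcomp Require Import all_classical all_reals all_analysis.
Set Implicit Arguments. Unset Strict Implicit. Unset Printing Implicit Defensive.
Import Order.TTheory GRing.Theory Num.Theory.
Import numFieldNormedType.Exports.
Local Open Scope classical_set_scope.
Local Open Scope ring_scope.

Section Defs.
Variables (R : realType) (m : nat).

Definition dotv (u v : 'rV[R]_m) : R := \sum_(k < m) u 0 k * v 0 k.
Definition sqdist (u v : 'rV[R]_m) : R := dotv (u - v) (u - v).

Definition convex_fun (f : 'rV[R]_m -> R) : Prop :=
  forall u v (l : R), 0 <= l <= 1 ->
    f (l *: u + (1 - l) *: v) <= l * f u + (1 - l) * f v.

Definition is_subgradient (f : 'rV[R]_m -> R) (x d : 'rV[R]_m) : Prop :=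
  forall y, f x + dotv d (y - x) <= f y.

Definition is_proj (A : set 'rV[R]_m) (x p : 'rV[R]_m) : Prop :=
  A p /\ forall y, A y -> sqdist x p <= sqdist x y.

End Defs.

From HB Require Import structures.
From mathcomp Require Import all_boot all_order all_algebra.
From mathcomp Require Import all_classical all_reals all_analysis.
From mathcomp Require Import ring lra.
Import Order.TTheory GRing.Theory Num.Theory.
Import numFieldNormedType.Exports.
Local Open Scope classical_set_scope.
Local Open Scope ring_scope.

(* For y in the solution set, V_y(t) = sum_i |x_i(t) - y|^2 is a Lyapunov function:
   the variational inequality of the projections, the subgradient inequality and the
   symmetry of a give V_y' <= -D with
   D = sum_ij a_ij |x_i - x_j|^2 + 2 tau sum_i (|x_i - P_i x_i|^2 + g_i^+(x_i)) >= 0.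
   Hence V_y is nonincreasing, the trajectories are bounded, and D is small at
   arbitrarily late times. Along such times x_i0 has a cluster point xs; along a
   filter realizing it D -> 0, so by connectivity every x_i, and every P_i x_i, tends
   to xs, which therefore lies in each X_i and satisfies g_i(xs) <= 0. Then V_xs is
   nonincreasing and tends to 0 along that filter, hence at +oo: all x_i tend to xs. *)

Lemma dominated_cvg0 {R : realFieldType} {T : Type} {F : set_system T} {FF : Filter F}
    {f h : T -> R} {c : R} :
  0 < c -> (forall t, 0 <= f t) -> (forall t, c * f t <= h t) ->
  h t @[t --> F] --> 0 -> f t @[t --> F] --> 0.
Proof.
move=> c_gt0 f_ge0 fh h0.
apply: (@squeeze_cvgr _ _ _ _ (cst 0) (fun t => c^-1 * h t)).
- apply: nearW => t; rewrite f_ge0 /=.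
  by rewrite -(ler_pM2l c_gt0) mulrA mulfV ?gt_eqF // mul1r.
- exact: cvg_cst.
- by rewrite -(mulr0 c^-1); apply: cvgM => //; exact: cvg_cst.
Qed.

Section InnerProduct.
Context {R : realType} {m : nat}.
Implicit Types u v w : 'rV[R]_m.

Lemma dotvDr u v w : dotv u (v + w) = dotv u v + dotv u w.
Proof. by rewrite /dotv -big_split; apply: eq_bigr => k _; rewrite !mxE mulrDr. Qed.

Lemma dotvNr u v : dotv u (- v) = - dotv u v.
Proof. by rewrite /dotv -sumrN; apply: eq_bigr => k _; rewrite !mxE mulrN. Qed.

Lemma dotvBr u v w : dotv u (v - w) = dotv u v - dotv u w.
Proof. by rewrite dotvDr dotvNr. Qed.

Lemma dotvZr u v (c : R) : dotv u (c *: v) = c * dotv u v.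
Proof. by rewrite /dotv mulr_sumr; apply: eq_bigr => k _; rewrite !mxE mulrCA. Qed.

Lemma dotv0r u : dotv u 0 = 0.
Proof. by rewrite /dotv big1 // => k _; rewrite mxE mulr0. Qed.

Lemma dotv_sumr (I : finType) u (c : I -> R) (w : I -> 'rV[R]_m) :
  dotv u (\sum_j c j *: w j) = \sum_j c j * dotv u (w j).
Proof.
rewrite /dotv; under eq_bigr do rewrite summxE mulr_sumr.
rewrite exchange_big /=; apply: eq_bigr => j _; rewrite mulr_sumr.
by apply: eq_bigr => k _; rewrite !mxE mulrCA.
Qed.

Lemma dotvv_ge0 u : 0 <= dotv u u.
Proof. by apply: sumr_ge0 => k _; rewrite -expr2 sqr_ge0. Qed.

Lemma sqdist_ge0 u v : 0 <= sqdist u v.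
Proof. exact: dotvv_ge0. Qed.

(* The norm of 'rV[R]_m is the sup norm, hence comparable to the Euclidean one. *)
Lemma normv_sqr_le_dotv u : `|u| ^+ 2 <= dotv u u.
Proof.
have [->|/mx_norm_neq0[[i k] /= uk]] := eqVneq `|u| 0.
  by rewrite expr0n dotvv_ge0.
rewrite -[`|u|]/(mx_norm u) uk (ord1 i) /dotv (bigD1 k) //= -[leLHS]addr0.
rewrite real_normK ?num_real // lerD // sumr_ge0 // => j _.
by rewrite -expr2 sqr_ge0.
Qed.

Lemma dotv_le_normv_sqr u : dotv u u <= m%:R * `|u| ^+ 2.
Proof.
have -> : m%:R * `|u| ^+ 2 = \sum_(k < m) `|u| ^+ 2.
  by rewrite sumr_const card_ord mulr_natl.
apply: ler_sum => k _.
rewrite -expr2 -real_normK ?num_real // lerXn2r ?nnegrE //.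
rewrite [leRHS]/Num.Def.normr /= mx_normrE.
by apply: le_trans (le_bigmax _ _ (ord0, k)).
Qed.

Lemma dotv_cvg0P {T} {F : set_system T} {FF : Filter F} (u : T -> 'rV[R]_m) :
  dotv (u t) (u t) @[t --> F] --> (0 : R) <-> u t @[t --> F] --> (0 : 'rV[R]_m).
Proof.
split=> [/cvgr0Pnorm_lt du|/cvg_norm u0].
  apply/cvgr0Pnorm_lt => e e0; apply: filterS (du _ (exprn_gt0 2 e0)) => t.
  rewrite ger0_norm ?dotvv_ge0 // => /(le_lt_trans (normv_sqr_le_dotv _)).
  by rewrite ltr_pXn2r ?nnegrE ?normr_ge0 ?ltW.
rewrite normr0 in u0.
apply: (dominated_cvg0 (h := fun t => m%:R * (`|u t| * `|u t|)) ltr01) => [t|t|].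
- exact: dotvv_ge0.
- by rewrite mul1r -expr2 dotv_le_normv_sqr.
- by rewrite -(mulr0 m%:R) -(mulr0 0); apply: cvgM; [exact: cvg_cst | exact: cvgM].
Qed.

End InnerProduct.

Section Projection.
Context {R : realType} {m : nat}.
Implicit Types x p y : 'rV[R]_m.

Lemma sqdist_segment x p y (s : R) :
  sqdist x (s *: y + (1 - s) *: p) =
  sqdist x p - 2 * s * dotv (x - p) (y - p) + s ^+ 2 * dotv (y - p) (y - p).
Proof.
rewrite /sqdist /dotv !mulr_sumr -sumrB -big_split; apply: eq_bigr => k _.
rewrite !mxE /=; ring.
Qed.

(* Otherwise a point of the segment [p, y] close enough to p would be closer to x. *)
Lemma is_proj_dotv_le0 {A : set 'rV[R]_m} {x p y} :
  convex_set A -> is_proj A x p -> A y -> dotv (x - p) (y - p) <= 0.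
Proof.
move=> cA [Ap pmin] Ay; set c := dotv (x - p) (y - p).
set D := dotv (y - p) (y - p); have D0 : 0 <= D by exact: dotvv_ge0.
rewrite leNgt; apply/negP => c0.
pose s := c / (c + D + 1); have cD : 0 < c + D + 1 by lra.
have s0 : 0 < s by rewrite divr_gt0.
have s1 : s <= 1 by rewrite ler_pdivrMr // mul1r; lra.
have /pmin : A (s *: y + (1 - s) *: p).
  by have := cA y p (Itv01 (ltW s0) s1); rewrite !inE; apply.
rewrite sqdist_segment -/c -/D => sD.
have sDc : s * D <= c by rewrite /s mulrAC ler_pdivrMr //; nra.
nra.
Qed.

Lemma is_proj_sqdist_le {A : set 'rV[R]_m} {x p y} :
  convex_set A -> is_proj A x p -> A y -> sqdist x p <= dotv (x - y) (x - p).
Proof.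
move=> cA xp Ay; have := is_proj_dotv_le0 cA xp Ay.
have -> : dotv (x - y) (x - p) = sqdist x p - dotv (x - p) (y - p).
  rewrite /sqdist /dotv -sumrB; apply: eq_bigr => k _; rewrite !mxE /=; ring.
lra.
Qed.

End Projection.

Section PositivePart.
Context {R : realType} {m : nat}.

Definition pos_part (f : 'rV[R]_m -> R) z := Num.max (f z) 0.

Lemma pos_part_ge0 f z : 0 <= pos_part f z.
Proof. by rewrite le_max lexx orbT. Qed.

Lemma subgradient_pos_part_le {f d y z} :
  (f z <= 0 -> d = 0) -> (0 < f z -> is_subgradient f z d) -> f y <= 0 ->
  pos_part f z <= dotv (z - y) d.
Proof.
move=> d0 dsub fy; rewrite /pos_part; have [fz|fz] := leP (f z) 0.
  by rewrite d0 // dotv0r.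
have -> : dotv (z - y) d = - dotv d (y - z).
  rewrite /dotv -sumrN; apply: eq_bigr => k _; rewrite !mxE /=; ring.
have := dsub fz y; lra.
Qed.

End PositivePart.

Section Derivatives.
Context {R : realType} {m : nat}.

Lemma is_derive_coord {f : R -> 'rV[R]_m} {t : R} {v : 'rV[R]_m} k :
  is_derive t 1 f v -> is_derive t 1 (fun s => f s 0 k) (v 0 k).
Proof.
move=> df; have dv : derivable f t 1 by [].
apply: DeriveDef; first exact: (derivable_mxP f t 1).1 dv 0 k.
by rewrite -[v]derive_val (derive_mx dv) mxE.
Qed.

Lemma is_derive_sqdist {f : R -> 'rV[R]_m} (y : 'rV[R]_m) {t : R} {v : 'rV[R]_m} :
  is_derive t 1 f v ->
  is_derive t 1 (fun s => sqdist (f s) y) (2 * dotv (f t - y) v).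
Proof.
move=> df.
have -> : (fun s => sqdist (f s) y) =
    \sum_(k < m) ((fun s => f s 0 k - y 0 k) * (fun s => f s 0 k - y 0 k)).
  by apply/funext => s; rewrite fct_sumE; apply: eq_bigr => k _; rewrite !mxE.
have dk k : is_derive t 1 (fun s => f s 0 k - y 0 k) (v 0 k).
  by rewrite -[v 0 k]subr0; apply: is_deriveB; exact: is_derive_coord.
apply: is_derive_eq (is_derive_sum (fun k => is_deriveM (dk k) (dk k))) _.
rewrite /dotv mulr_sumr; apply: eq_bigr => k _; rewrite !mxE /GRing.scale /=.
ring.
Qed.

Lemma derive_le0_nonincreasing (f df : R -> R) (s : R) :
  (forall u, s <= u -> is_derive u 1 f (df u)) -> (forall u, s < u -> df u <= 0) ->
  forall u v, s <= u -> u <= v -> f v <= f u.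
Proof.
move=> fdf df0; apply: ler0_derive1_nincry.
- by move=> u; rewrite in_itv /= andbT => /ltW/fdf [].
- move=> u; rewrite in_itv /= andbT derive1E => su.
  by have [_ ->] := fdf _ (ltW su); exact: df0.
- apply: derivable_within_continuous => u; rewrite in_itv /= andbT.
  by move=> /fdf [].
Qed.

End Derivatives.

Lemma ler_sum_term {R : numDomainType} {I : finType} {F : I -> R} i :
  (forall j, 0 <= F j) -> F i <= \sum_j F j.
Proof. by move=> F_ge0; rewrite (bigD1 i) //= lerDl sumr_ge0. Qed.

(* Symmetrizing the double sum pairs the terms (i, j) and (j, i). *)
Lemma laplacian_dotv (R : realType) (n m : nat) (a : 'I_n -> 'I_n -> R)
    (z : 'I_n -> 'rV[R]_m) (y : 'rV[R]_m) :
  (forall i j, a i j = a j i) ->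
  \sum_i \sum_j a i j * (2 * dotv (z i - y) (z j - z i))
  = - \sum_i \sum_j a i j * sqdist (z i) (z j).
Proof.
move=> asym.
set S := \sum_i \sum_j a i j * dotv (z i - y) (z j - z i).
have S' : S = \sum_i \sum_j a i j * dotv (z j - y) (z i - z j).
  by rewrite /S exchange_big; apply: eq_bigr => i _; apply: eq_bigr => j _; rewrite asym.
have -> : \sum_i \sum_j a i j * (2 * dotv (z i - y) (z j - z i)) = S + S.
  rewrite /S -big_split; apply: eq_bigr => i _.
  by rewrite -big_split; apply: eq_bigr => j _ /=; ring.
rewrite {2}S' /S -big_split -sumrN; apply: eq_bigr => i _.
rewrite -big_split -sumrN; apply: eq_bigr => j _ /=.
rewrite -mulrDr -mulrN; congr (_ * _).
rewrite /sqdist /dotv -big_split -sumrN; apply: eq_bigr => k _; rewrite !mxE /=; ring.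
Qed.

Lemma connect_cvg0 {K : numFieldType} {V : normedModType K} {T : Type}
    {F : set_system T} {FF : Filter F} {I : finType} {e : rel I} {f : I -> T -> V}
    {i j : I} :
  (forall k l, e k l -> f k t - f l t @[t --> F] --> 0) ->
  connect e i j -> f i t - f j t @[t --> F] --> 0.
Proof.
move=> fe /connectP[p + ->]; elim: p i => [|k p IHp] i /=.
  by move=> _; under eq_cvg do rewrite subrr; exact: cvg_cst.
move=> /andP[/fe eik /IHp ekp].
have -> : (fun t => f i t - f (last k p) t) =
    (fun t => (f i t - f k t) + (f k t - f (last k p) t)).
  by apply/funext => t; rewrite addrA subrK.
by rewrite -[0]addr0; exact: cvgD.
Qed.

Section Filters.
Context {R : realType}.

Lemma frequently_lt_filter {h : R -> R} :
  (forall e T, 0 < e -> exists2 t, T <= t & h t < e) ->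
  exists F : set_system R, [/\ ProperFilter F,
    forall T, \forall t \near F, T <= t &
    forall e, 0 < e -> \forall t \near F, h t < e].
Proof.
move=> hfreq.
pose F := filter_from [set p : R * R | 0 < p.2]
  (fun p => [set t | p.1 <= t /\ h t < p.2]).
have FF : Filter F.
  apply: filter_from_filter; first by exists (0, 1) => /=.
  move=> [T1 e1] [T2 e2] /= e1_gt0 e2_gt0.
  exists (Num.max T1 T2, Num.min e1 e2); first by rewrite /= lt_min e1_gt0.
  move=> t /= []; rewrite ge_max lt_min => /andP[T1t T2t] /andP[he1 he2].
  by split; split.
exists F; split.
- apply: filter_from_proper => -[T e] /= e_gt0.
  by have [t Tt ht] := hfreq e T e_gt0; exists t.
- by move=> T; exists (T, 1) => //= t [].
- by move=> e e_gt0; exists (0, e) => //= t [].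
Qed.

Lemma nonincreasing_cvg_pinfty {f : R -> R} {s l : R} {H : set_system R}
    {HF : ProperFilter H} :
  (forall T, \forall t \near H, T <= t) ->
  (forall u v, s <= u -> u <= v -> f v <= f u) ->
  f t @[t --> H] --> l -> f t @[t --> +oo] --> l.
Proof.
move=> Hlate fnincr fl; apply/cvgrPdist_le => e e_gt0.
have /filter_ex[t0 [st0 ft0]] : \forall t \near H, s <= t /\ f t < l + e.
  by apply: filterS2 (Hlate s) (cvgr_lt l fl (l + e) _); rewrite ?ltrDl.
near=> u.
have t0u : t0 <= u by near: u; apply: nbhs_pinfty_ge; exact: num_real.
have /filter_ex[t [ut ft]] : \forall t \near H, u <= t /\ l - e < f t.
  by apply: filterS2 (Hlate u) (cvgr_gt l fl (l - e) _); rewrite ?gtrDl ?oppr_lt0.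
have fut := fnincr u t (le_trans st0 t0u) ut.
have ft0u := fnincr t0 u st0 t0u.
by rewrite ler_distl; apply/andP; split; apply: ltW; lra.
Unshelve. all: end_near. Qed.

End Filters.

Lemma cluster_finer_cvg {T : Type} {U : topologicalType} {F : set_system T}
    {FF : Filter F} {f : T -> U} {p : U} :
  cluster (f @ F) p ->
  exists G : set_system T, [/\ ProperFilter G, F `<=` G & f @ G --> p].
Proof.
move=> clp.
pose G := filter_from [set AB : set T * set U | F AB.1 /\ nbhs p AB.2]
  (fun AB => AB.1 `&` f @^-1` AB.2).
have GF : Filter G.
  apply: filter_from_filter; first by exists (setT, setT); split; exact: filterT.
  move=> [A1 B1] [A2 B2] /= [FA1 pB1] [FA2 pB2].
  exists (A1 `&` A2, B1 `&` B2); first by split; exact: filterI.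
  by move=> t /= [[A1t A2t] [B1t B2t]].
exists G; split.
- apply: filter_from_proper => -[A B] /= [FA pB].
  have fFA : F (f @^-1` (f @` A)) by apply: filterS FA => t At; exists t.
  by have [_ [[t At <-] ftB]] := clp _ _ fFA pB; exists t.
- by move=> A FA; exists (A, setT) => //=; split => //; exact: filterT.
- by move=> B pB; exists (setT, B) => //=; split => //; exact: filterT.
Qed.

Lemma closed_ball_rV_compact {R : realType} {m : nat} (y : 'rV[R]_m) {r : R} :
  0 < r -> compact (closed_ball y r).
Proof.
move=> r_gt0; apply: bounded_closed_compact; last exact: closed_ball_closed.
exists (`|y| + r); split; first exact: num_real.
move=> M yrM z; rewrite closed_ballE // /closed_ball_ /= => yz.
rewrite -(subrK y z) (le_trans (ler_normD _ _)) // -opprB normrN.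
lra.
Qed.

Section CFPFlow.
Variables (R : realType) (n m : nat) (a : 'I_n -> 'I_n -> R)
  (g : 'I_n -> 'rV[R]_m -> R) (Xs : 'I_n -> set 'rV[R]_m)
  (P : 'I_n -> 'rV[R]_m -> 'rV[R]_m) (dg : 'I_n -> 'rV[R]_m -> 'rV[R]_m)
  (tau : R) (x : 'I_n -> R -> 'rV[R]_m).
Implicit Types (s t u : R) (y : 'rV[R]_m) (i j k l : 'I_n).

Hypothesis a_sym : forall i j, a i j = a j i.
Hypothesis a_ge0 : forall i j, 0 <= a i j.
Hypothesis g_cont : forall i, continuous (g i).
Hypothesis Xs_closed : forall i, closed (Xs i).
Hypothesis Xs_convex : forall i, convex_set (Xs i).
Hypothesis P_proj : forall i y, is_proj (Xs i) y (P i y).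
Hypothesis dg0 : forall i y, g i y <= 0 -> dg i y = 0.
Hypothesis dg_subgradient : forall i y, 0 < g i y -> is_subgradient (g i) y (dg i y).
Hypothesis tau_gt0 : 0 < tau.

Let tau2_gt0 : 0 < 2 * tau. Proof. by rewrite mulr_gt0. Qed.
Let tau2_ge0 : 0 <= 2 * tau. Proof. exact: ltW. Qed.

Definition velocity i t := \sum_j a i j *: (x j t - x i t)
  - tau *: ((x i t - P i (x i t)) + dg i (x i t)).

Hypothesis x_derive : forall i t, 0 < t -> is_derive t 1 (x i) (velocity i t).

Definition cfp_solution y := forall i, g i y <= 0 /\ Xs i y.

Definition lyapunov y t := \sum_i sqdist (x i t) y.

Definition disagreement t := \sum_i \sum_j a i j * sqdist (x i t) (x j t).

Definition infeasibility t :=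
  \sum_i (sqdist (x i t) (P i (x i t)) + pos_part (g i) (x i t)).

Definition dissipation t := disagreement t + 2 * tau * infeasibility t.

Lemma lyapunov_ge0 y t : 0 <= lyapunov y t.
Proof. by apply: sumr_ge0 => i _; exact: sqdist_ge0. Qed.

Lemma sqdist_le_lyapunov i y t : sqdist (x i t) y <= lyapunov y t.
Proof.
rewrite /lyapunov (bigD1 i) //= lerDl.
by apply: sumr_ge0 => j _; exact: sqdist_ge0.
Qed.

Lemma disagreement_ge0 t : 0 <= disagreement t.
Proof. by do 2![apply: sumr_ge0 => ? _]; rewrite mulr_ge0 ?sqdist_ge0. Qed.

Lemma infeasibility_ge0 t : 0 <= infeasibility t.
Proof. by apply: sumr_ge0 => i _; rewrite addr_ge0 ?sqdist_ge0 ?pos_part_ge0. Qed.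

Lemma dissipation_ge0 t : 0 <= dissipation t.
Proof.
by rewrite addr_ge0 ?disagreement_ge0 // mulr_ge0 ?infeasibility_ge0.
Qed.

Lemma edge_le_dissipation k l t : a k l * sqdist (x k t) (x l t) <= dissipation t.
Proof.
have term_ge0 i j : 0 <= a i j * sqdist (x i t) (x j t) by rewrite mulr_ge0 ?sqdist_ge0.
apply: le_trans (ler_sum_term l (term_ge0 k)) _.
apply: le_trans (ler_sum_term k (fun i => sumr_ge0 _ (fun j _ => term_ge0 i j))) _.
by rewrite lerDl mulr_ge0 ?infeasibility_ge0.
Qed.

Lemma agent_le_dissipation i t :
  2 * tau * (sqdist (x i t) (P i (x i t)) + pos_part (g i) (x i t)) <= dissipation t.
Proof.
rewrite /dissipation -[leLHS]add0r lerD ?disagreement_ge0 // ler_wpM2l //.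
by apply: (ler_sum_term i) => j; rewrite addr_ge0 ?sqdist_ge0 ?pos_part_ge0.
Qed.

Lemma is_derive_lyapunov y t : 0 < t ->
  is_derive t 1 (lyapunov y) (\sum_i 2 * dotv (x i t - y) (velocity i t)).
Proof.
move=> t_gt0; have -> : lyapunov y = \sum_i (fun s => sqdist (x i s) y).
  by apply/funext => s; rewrite fct_sumE.
have dx i := is_derive_sqdist y (x_derive i t t_gt0).
exact: is_derive_eq (is_derive_sum dx) _.
Qed.

Lemma lyapunov_derive_le y t : cfp_solution y ->
  \sum_i 2 * dotv (x i t - y) (velocity i t) <= - dissipation t.
Proof.
move=> sol_y.
have split_velocity i : 2 * dotv (x i t - y) (velocity i t) =
    \sum_j a i j * (2 * dotv (x i t - y) (x j t - x i t))
    - 2 * tau * (dotv (x i t - y) (x i t - P i (x i t))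
                 + dotv (x i t - y) (dg i (x i t))).
  rewrite /velocity [in LHS]dotvBr dotv_sumr dotvZr [in LHS]dotvDr mulrBr mulr_sumr.
  by congr (_ - _); [apply: eq_bigr => j _|]; ring.
rewrite (eq_bigr _ (fun i _ => split_velocity i)) sumrB laplacian_dotv //.
rewrite /dissipation opprD lerD // -mulr_sumr lerN2 ler_wpM2l //.
apply: ler_sum => i _; have [g_y X_y] := sol_y i.
apply: lerD; first exact: is_proj_sqdist_le (Xs_convex i) (P_proj i _) X_y.
exact: subgradient_pos_part_le (dg0 i _) (dg_subgradient i _) g_y.
Qed.

Lemma lyapunov_dissipation_nonincreasing {y} c {s} :
  cfp_solution y -> 0 < s -> (forall u, s < u -> c <= dissipation u) ->
  forall u v, s <= u -> u <= v -> lyapunov y v + c * v <= lyapunov y u + c * u.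
Proof.
move=> sol_y s_gt0 c_le.
apply: (@derive_le0_nonincreasing _ (fun u => lyapunov y u + c * u)
  (fun u => \sum_i 2 * dotv (x i u - y) (velocity i u) + c)).
- move=> u su; have -> : (fun u => lyapunov y u + c * u) = lyapunov y + c *: id.
    by apply/funext.
  apply: is_derive_eq (is_deriveD (is_derive_lyapunov y u (lt_le_trans s_gt0 su))
                                  (is_deriveZ c (is_derive_id u 1))) _.
  by rewrite /GRing.scale /= mulr1.
- by move=> u /c_le cu; have := lyapunov_derive_le y u sol_y; lra.
Qed.

Lemma lyapunov_nonincreasing {y s} : cfp_solution y -> 0 < s ->
  forall u v, s <= u -> u <= v -> lyapunov y v <= lyapunov y u.
Proof.
move=> sol_y s_gt0 u v su uv.
have := lyapunov_dissipation_nonincreasing 0 sol_y s_gt0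
  (fun u _ => dissipation_ge0 u) _ _ su uv.
by rewrite !mul0r !addr0.
Qed.

(* If dissipation >= e from time T on, lyapunov y would decrease at rate e and
   become negative. *)
Lemma dissipation_frequently_lt {y} : cfp_solution y ->
  forall e T, 0 < e -> exists2 t, T <= t & dissipation t < e.
Proof.
move=> sol_y e T e_gt0; apply: contrapT => /forall2NP never_lt.
have e_le u : Num.max T 1 < u -> e <= dissipation u.
  move=> /ltW; rewrite ge_max => /andP[Tu _].
  by case: (never_lt u) => // /negP; rewrite -leNgt.
set s := Num.max T 1; have s_ge1 : 1 <= s by rewrite le_max lexx orbT.
set v := s + lyapunov y s / e + 1.
have sv : s <= v by rewrite /v -addrA lerDl addr_ge0 // divr_ge0 ?lyapunov_ge0 ?ltW.
have := lyapunov_dissipation_nonincreasing e sol_y (lt_le_trans ltr01 s_ge1) e_le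
  _ _ (lexx s) sv.
have := lyapunov_ge0 y v.
have -> : e * v = e * s + lyapunov y s + e.
  by rewrite /v !mulrDr mulr1 mulrCA divff ?mulr1 ?gt_eqF.
lra.
Qed.

Section ClusterPoint.
Context {H : set_system R} {H_proper : ProperFilter H} {i0 : 'I_n} {xs : 'rV[R]_m}.
Hypothesis a_connected : forall i j, connect (fun k l => 0 < a k l) i j.
Hypothesis dissipation_cvg0 : dissipation t @[t --> H] --> 0.
Hypothesis x0_cvg : x i0 t @[t --> H] --> xs.

Lemma edge_cvg0 k l : 0 < a k l -> x k t - x l t @[t --> H] --> (0 : 'rV[R]_m).
Proof.
move=> a_kl; apply/dotv_cvg0P; apply: (dominated_cvg0 a_kl) dissipation_cvg0 => t.
  exact: sqdist_ge0.
exact: edge_le_dissipation.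
Qed.

Lemma agent_cvg i : x i t @[t --> H] --> xs.
Proof.
rewrite -[xs]add0r (eq_cvg _ _ (fun t => esym (subrK (x i0 t) (x i t)))).
by apply: cvgD; [exact: connect_cvg0 edge_cvg0 (a_connected i i0) | exact: x0_cvg].
Qed.

Lemma proj_residual_cvg0 i : x i t - P i (x i t) @[t --> H] --> (0 : 'rV[R]_m).
Proof.
apply/dotv_cvg0P; apply: (dominated_cvg0 tau2_gt0) dissipation_cvg0 => t.
  exact: sqdist_ge0.
apply: le_trans (agent_le_dissipation i t).
by rewrite ler_wpM2l // lerDl pos_part_ge0.
Qed.

Lemma pos_part_cvg0 i : pos_part (g i) (x i t) @[t --> H] --> 0.
Proof.
apply: (dominated_cvg0 tau2_gt0) dissipation_cvg0 => t.
  exact: pos_part_ge0.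
apply: le_trans (agent_le_dissipation i t).
by rewrite ler_wpM2l // lerDr sqdist_ge0.
Qed.

Lemma cluster_point_solution : cfp_solution xs.
Proof.
move=> i; split.
  apply: (ler_cvg_to _ (pos_part_cvg0 i)).
    exact: cvg_comp (agent_cvg i) (g_cont i xs).
  by apply: nearW => t; rewrite /pos_part le_max lexx.
apply: (@closed_cvg _ _ H _ (fun t => P i (x i t)) _ (Xs_closed i)).
  by apply: nearW => t; exact: (P_proj i _).1.
rewrite -[xs]subr0 (eq_cvg _ _ (fun t => esym (subKr (x i t) (P i (x i t))))).
by apply: cvgB; [exact: agent_cvg | exact: proj_residual_cvg0].
Qed.

Lemma lyapunov_cvg0 : lyapunov xs t @[t --> H] --> 0.
Proof.
have sqdist_cvg0 i : sqdist (x i t) xs @[t --> H] --> 0.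
  by apply/dotv_cvg0P/subr_cvg0; exact: agent_cvg.
have -> : (0 : R) = \sum_(i < n) 0 by rewrite big1.
rewrite /lyapunov.
by apply: (cvg_big add_continuous) => // i _; exact: sqdist_cvg0.
Qed.

End ClusterPoint.

(* The radius r is at least 1, so |x i t - y|^2 <= lyapunov y 1 < r forces |x i t - y| <= r. *)
Lemma trajectory_in_closed_ball i {y} : cfp_solution y ->
  forall t, 1 <= t -> closed_ball y (1 + lyapunov y 1) (x i t).
Proof.
move=> sol_y t t_ge1; rewrite closed_ballE ?ltr_pwDl ?lyapunov_ge0 // /closed_ball_ /=.
have := normv_sqr_le_dotv (x i t - y); have := sqdist_le_lyapunov i y t.
have := lyapunov_nonincreasing sol_y ltr01 _ _ (lexx 1) t_ge1.
have := lyapunov_ge0 y 1; have := normr_ge0 (x i t - y).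
rewrite distrC /sqdist; nra.
Qed.

Theorem cfp_flow_cvg y0 i0 :
  (forall i j, connect (fun k l => 0 < a k l) i j) -> cfp_solution y0 ->
  (forall i j, `|x i t - x j t| @[t --> +oo] --> 0) /\
  exists2 xs, cfp_solution xs & forall i, x i t @[t --> +oo] --> xs.
Proof.
move=> a_connected sol_y0.
have [F [F_proper F_late F_small]] :=
  frequently_lt_filter (dissipation_frequently_lt sol_y0).
have [xs [_ cluster_xs]] :=
  closed_ball_rV_compact y0 (ltr_pwDl ltr01 (lyapunov_ge0 y0 1))
    (x i0 @ F) _ (filterS (trajectory_in_closed_ball i0 sol_y0) (F_late 1)).
have [H [H_proper FH x0_cvg]] := cluster_finer_cvg cluster_xs.
have dissipation_cvg0 : dissipation t @[t --> H] --> 0.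
  apply/cvgr0Pnorm_lt => e e_gt0; apply: filterS (FH _ (F_small e e_gt0)) => t.
  by rewrite ger0_norm ?dissipation_ge0.
have sol_xs : cfp_solution xs.
  exact: cluster_point_solution a_connected dissipation_cvg0 x0_cvg.
have lyapunov_oo : lyapunov xs t @[t --> +oo] --> 0.
  have H_late T : \forall t \near H, T <= t by exact: FH (F_late T).
  apply: (nonincreasing_cvg_pinfty H_late (lyapunov_nonincreasing sol_xs ltr01)).
  exact: lyapunov_cvg0 a_connected dissipation_cvg0 x0_cvg.
have x_oo i : x i t @[t --> +oo] --> xs.
  apply/subr_cvg0/dotv_cvg0P; apply: (dominated_cvg0 ltr01) lyapunov_oo => t.
    exact: sqdist_ge0.
  by rewrite mul1r sqdist_le_lyapunov.
split; last by exists xs.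
move=> i j; apply/norm_cvg0P; rewrite -(subrr xs).
by apply: cvgB; [exact: x_oo | exact: x_oo].
Qed.

End CFPFlow.

Theorem corollary2 (R : realType) (n m : nat)
  (a : 'I_n -> 'I_n -> R)
  (g : 'I_n -> 'rV[R]_m -> R) (Xs : 'I_n -> set 'rV[R]_m)
  (P : 'I_n -> 'rV[R]_m -> 'rV[R]_m)
  (dg : 'I_n -> 'rV[R]_m -> 'rV[R]_m)
  (tau : R) (x : 'I_n -> R -> 'rV[R]_m) :
  (* undirected connected weighted graph *)
  (forall i j, a i j = a j i) ->
  (forall i j, 0 <= a i j) ->
  (forall i j, connect (fun k l => 0 < a k l) i j) ->
  (* the CFP data *)
  (forall i, convex_fun (g i)) ->
  (forall i, continuous (g i)) ->
  (forall i, closed (Xs i)) ->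
  (forall i, convex_set (Xs i)) ->
  (* P i is the Euclidean projection onto X_i *)
  (forall i y, is_proj (Xs i) y (P i y)) ->
  (* dg i is the chosen subgradient of g_i^+ *)
  (forall i y, g i y <= 0 -> dg i y = 0) ->
  (forall i y, 0 < g i y -> is_subgradient (g i) y (dg i y)) ->
  (* non-empty solution set *)
  (exists y, forall i, g i y <= 0 /\ Xs i y) ->
  0 < tau ->
  (* the dynamics *)
  (forall i (t : R), 0 < t ->
     is_derive t 1 (x i)
       (\sum_(j < n) a i j *: (x j t - x i t)
        - tau *: ((x i t - P i (x i t)) + dg i (x i t)))) ->
  (forall i j, `|x i t - x j t| @[t --> +oo%R] --> 0) /\
  exists xs : 'rV[R]_m, (forall i, g i xs <= 0 /\ Xs i xs) /\
    forall i, x i t @[t --> +oo%R] --> xs.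
Proof.
move=> a_sym a_ge0 a_connected _ g_cont Xs_closed Xs_convex P_proj dg0 dg_sub
  [y0 sol_y0] tau_gt0 x_derive.
have [n0|n_gt0] := posnP n.
  have no_agent (i : 'I_n) : False by case: i; rewrite n0.
  by split=> [i|]; [|exists y0]; try split=> // i; case: (no_agent i).
have [consensus [xs sol_xs x_cvg]] := @cfp_flow_cvg R n m a g Xs P dg tau x
  a_sym a_ge0 g_cont Xs_closed Xs_convex P_proj dg0 dg_sub tau_gt0 x_derive
  y0 (Ordinal n_gt0) a_connected sol_y0.
by split=> //; exists xs.
Qed.
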